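(* For any $n\geq 2$, $\mathbf{D}_n=(D_n,<)$ is not ultrahomogeneous.
   Context: Fix $n\geq 2$ and a set $D_n\subseteq\mathbb{Q}^n$ which is dense in $\mathbb{Q}^n$ (product topology) and such that no two distinct points of $D_n$ share a common coordinate; $<$ is the product order ($\mathbf{a}<\mathbf{b}$ iff $a_i\leq b_i$ for all $i$ and $\mathbf{a}\neq\mathbf{b}$). A structure is ultrahomogeneous if every isomorphism between finite substructures extends to an automorphism of the whole structure. *)

From mathcomp Require Import all_boot all_order all_algebra.
Set Implicit Arguments. Unset Strict Implicit. Unset Printing Implicit Defensive.
Import Order.TTheory GRing.Theory Num.Theory.
Local Open Scope ring_scope.

Definition pt (n : nat) := {ffun 'I_n -> rat}.

Definition prod_lt (n : nat) (a b : pt n) : Prop :=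
  (forall i, a i <= b i) /\ a <> b.

(* D is dense in Q^n (product topology): D meets every nonempty basic open
   set, i.e. every open box prod_i (a_i, b_i) with a_i < b_i. *)
Definition dense_in (n : nat) (D : pt n -> Prop) : Prop :=
  forall a b : pt n, (forall i, a i < b i) ->
    exists d, D d /\ forall i, a i < d i /\ d i < b i.

Definition no_common_coord (n : nat) (D : pt n -> Prop) : Prop :=
  forall x y, D x -> D y -> x <> y -> forall i, x i <> y i.

Definition finite_partial_iso (n : nat) (D : pt n -> Prop)
    (A : seq (pt n)) (f : pt n -> pt n) : Prop :=
  (forall x, x \in A -> D x) /\
  (forall x, x \in A -> D (f x)) /\
  (forall x y, x \in A -> y \in A -> f x = f y -> x = y) /\
  (forall x y, x \in A -> y \in A -> (prod_lt x y <-> prod_lt (f x) (f y))).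

Definition automorphism (n : nat) (D : pt n -> Prop) (g : pt n -> pt n) : Prop :=
  (forall x, D x -> D (g x)) /\
  (forall x y, D x -> D y -> g x = g y -> x = y) /\
  (forall y, D y -> exists x, D x /\ g x = y) /\
  (forall x y, D x -> D y -> (prod_lt x y <-> prod_lt (g x) (g y))).

Definition ultrahomogeneous (n : nat) (D : pt n -> Prop) : Prop :=
  forall (A : seq (pt n)) (f : pt n -> pt n), finite_partial_iso D A f ->
    exists g, automorphism D g /\ forall x, x \in A -> g x = f x.

From mathcomp Require Import all_boot all_order all_algebra.
From mathcomp Require Import lra.
Set Implicit Arguments. Unset Strict Implicit. Unset Printing Implicit Defensive.
Import Order.TTheory GRing.Theory Num.Theory.
Local Open Scope ring_scope.

(* Take an antichain a, b, c in D such that every common lower bound of a and c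
   lies below b, and a point x below b and c but not below a.  The transposition
   of a and b fixing c is an isomorphism of finite substructures.  An automorphism
   g extending it pulls x back to a common lower bound y of a and c; then y < b,
   so x = g y < g b = a, a contradiction.  Density alone provides such points. *)

Section ProductOrder.

Context {n : nat}.
Implicit Types (D : pt n -> Prop) (a b c x y : pt n).

Definition incomparable a b := [/\ a <> b, ~ prod_lt a b & ~ prod_lt b a].

Definition antichain (A : seq (pt n)) :=
  forall x y, x \in A -> y \in A -> ~ prod_lt x y.

Lemma prod_lt_irrefl x : ~ prod_lt x x.
Proof. by case. Qed.

Lemma prod_lt_of_lt (i : 'I_n) x y : (forall k, x k < y k) -> prod_lt x y.
Proof.
move=> xy; split=> [k|exy]; first exact: ltW.
by have := xy i; rewrite exy ltxx.
Qed.

Lemma not_prod_lt_of_lt (i : 'I_n) x y : y i < x i -> ~ prod_lt x y.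
Proof. by move=> yx [/(_ i) xy _]; move: yx; rewrite ltNge xy. Qed.

Lemma incomparable_of_lt (i j : 'I_n) a b :
  a i < b i -> b j < a j -> incomparable a b.
Proof.
move=> ab ba; split; [|exact: not_prod_lt_of_lt ba|exact: not_prod_lt_of_lt ab].
by move=> eab; move: ab; rewrite eab ltxx.
Qed.

Lemma prod_lt_below_meet (i : 'I_n) a b c y :
  (forall k, a k < b k \/ c k < b k) -> prod_lt y a -> prod_lt y c -> prod_lt y b.
Proof.
move=> abc [ya _] [yc _]; apply: (prod_lt_of_lt i) => k.
by case: (abc k); [apply: le_lt_trans (ya k) | apply: le_lt_trans (yc k)].
Qed.

Lemma coord_cases (i j : 'I_n) (P : 'I_n -> Prop) :
  P i -> P j -> (forall k, k != i -> k != j -> P k) -> forall k, P k.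
Proof.
move=> Pi Pj Pk k; have [->//|ki] := eqVneq k i.
by have [->//|kj] := eqVneq k j; apply: Pk.
Qed.

Lemma dense_in_near D (i j : 'I_n) (p q r : rat) : dense_in D -> i != j ->
  exists2 d, D d & [/\ p < d i < p + 1, q < d j < q + 1 &
                       forall k, k != i -> k != j -> r < d k < r + 1].
Proof.
move=> dD ij; pose corner s : pt n :=
  [ffun k => (if k == i then p else if k == j then q else r) + s].
have [|d [Dd near]] := dD (corner 0) (corner 1).
  by move=> k; rewrite !ffunE ltrD2l ltr01.
exists d => //; split=> [||k ki kj].
- by have [] := near i; rewrite !ffunE eqxx !addr0 => -> ->.
- by have [] := near j; rewrite !ffunE eq_sym (negPf ij) eqxx !addr0 => -> ->.
- by have [] := near k; rewrite !ffunE (negPf ki) (negPf kj) !addr0 => -> ->.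
Qed.

Definition transp a b x := if x == a then b else if x == b then a else x.

Lemma transpL a b : transp a b a = b.
Proof. by rewrite /transp eqxx. Qed.

Lemma transpR a b : transp a b b = a.
Proof. by rewrite /transp; have [->|_] := eqVneq b a; rewrite ?eqxx. Qed.

Lemma transp_id a b x : x != a -> x != b -> transp a b x = x.
Proof. by rewrite /transp => /negPf-> /negPf->. Qed.

Lemma transpK a b : involutive (transp a b).
Proof.
move=> x; have [->|xa] := eqVneq x a; first by rewrite transpL transpR.
have [->|xb] := eqVneq x b; first by rewrite transpR transpL.
by rewrite !transp_id.
Qed.

Lemma transp_mem a b s x : x \in [:: a, b & s] -> transp a b x \in [:: a, b & s].
Proof.
have [->|xa] := eqVneq x a; first by rewrite transpL !inE !eqxx orbT.
have [->|xb] := eqVneq x b; first by rewrite transpR !inE !eqxx.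
by rewrite transp_id.
Qed.

Lemma antichain_partial_iso D (A : seq (pt n)) (f : pt n -> pt n) :
  {in A, forall x, D x} -> {in A, forall x, f x \in A} -> {in A &, injective f} ->
  antichain A -> finite_partial_iso D A f.
Proof.
move=> DA fA finj anti; split=> //; split=> [x /fA/DA //|]; split=> // x y xA yA.
by split=> [/(anti x y xA yA)|/(anti _ _ (fA x xA) (fA y yA))].
Qed.

Lemma automorphism_common_lower_preimage D (g : pt n -> pt n) a c x :
  automorphism D g -> D a -> D c -> D x ->
  prod_lt x (g a) -> prod_lt x (g c) ->
  exists2 y, D y & [/\ g y = x, prod_lt y a & prod_lt y c].
Proof.
move=> [_ [_ [gsurj gmono]]] Da Dc Dx xa xc.
have [y [Dy gy]] := gsurj x Dx; exists y => //; rewrite -gy in xa xc.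
by split=> //; [apply/(gmono y a Dy Da)|apply/(gmono y c Dy Dc)].
Qed.

Lemma transposition_not_ultrahomogeneous D a b c x :
  D a -> D b -> D c -> D x ->
  incomparable a b -> incomparable a c -> incomparable b c ->
  (forall y, D y -> prod_lt y a -> prod_lt y c -> prod_lt y b) ->
  prod_lt x b -> prod_lt x c -> ~ prod_lt x a -> ~ ultrahomogeneous D.
Proof.
move=> Da Db Dc Dx [ab nab nba] [ac nac nca] [bc nbc ncb] meet xb xc xa UH.
have anti : antichain [:: a; b; c].
  move=> y z; rewrite !inE => /or3P[]/eqP-> /or3P[]/eqP->; by [|apply: prod_lt_irrefl].
have [|g [gaut gext]] := UH [:: a; b; c] (transp a b).
  apply: antichain_partial_iso => //.
  - by move=> y; rewrite !inE => /or3P[]/eqP->.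
  - by move=> y; apply: transp_mem.
  - by move=> y z _ _; apply: (can_inj (transpK a b)).
have [ga gb gc] : [/\ g a = b, g b = a & g c = c].
  have [ca cb] : c != a /\ c != b by split; apply/eqP=> ec; [apply: ac | apply: bc].
  by rewrite !gext ?inE ?eqxx ?orbT // transpL transpR transp_id.
rewrite -ga in xb; rewrite -gc in xc.
have [y Dy [gy ya yc]] := automorphism_common_lower_preimage gaut Da Dc Dx xb xc.
apply: xa; rewrite -gy -gb; have [_ [_ [_ gmono]]] := gaut.
by apply/(gmono y b Dy Db); apply: meet.
Qed.

End ProductOrder.

Theorem proposition2p4 (n : nat) (D : pt n -> Prop) :
  (2 <= n)%N -> dense_in D -> no_common_coord D -> ~ ultrahomogeneous D.
Proof.
move=> n2 dD _; pose i : 'I_n := Ordinal (ltnW n2); pose j : 'I_n := Ordinal n2.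
have near p q r := dense_in_near (D := D) (i := i) (j := j) p q r dD isT.
have [a Da [ai aj ak]] := near 0 4 0.
have [b Db [bi bj bk]] := near 2 2 2.
have [c Dc [ci cj ck]] := near 4 0 0.
have [x Dx [xi xj xk]] := near 1 (-1) (-2).
apply: (transposition_not_ultrahomogeneous Da Db Dc Dx).
- by apply: (incomparable_of_lt (i := i) (j := j)); lra.
- by apply: (incomparable_of_lt (i := i) (j := j)); lra.
- by apply: (incomparable_of_lt (i := i) (j := j)); lra.
- move=> y _; apply: (prod_lt_below_meet i); apply: (coord_cases (i := i) (j := j)).
  + by left; lra.
  + by right; lra.
  + by move=> k ki kj; left; have := ak k ki kj; have := bk k ki kj; lra.
- apply: (prod_lt_of_lt i); apply: (coord_cases (i := i) (j := j)); try lra.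
  by move=> k ki kj; have := xk k ki kj; have := bk k ki kj; lra.
- apply: (prod_lt_of_lt i); apply: (coord_cases (i := i) (j := j)); try lra.
  by move=> k ki kj; have := xk k ki kj; have := ck k ki kj; lra.
- by apply: (not_prod_lt_of_lt (i := i)); lra.
Qed.
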